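(* Let $G=\langle\alpha,\beta\mid\alpha^2=\beta^3=e\rangle$. The space $\mathrm{Hom}(G,\mathrm{Homeo}_+(S^1))$ is locally path-connected; more precisely, every neighbourhood of every point contains a path-connected neighbourhood of that point.
   Context: $\mathrm{Homeo}_+(S^1)$ carries the $C^0$ (uniform) topology. $\mathrm{Hom}(G,\mathrm{Homeo}_+(S^1))$ is identified with the set of pairs $(\psi(\alpha),\psi(\beta))$ of orientation-preserving homeomorphisms with $\psi(\alpha)^2=\mathrm{id}$ and $\psi(\beta)^3=\mathrm{id}$, with the topology of uniform convergence of $\psi(\alpha)$ and $\psi(\beta)^{\pm1}$. *)

From Stdlib Require Import Reals Lra.
Open Scope R_scope.

(** The circle S^1 = R/Z, represented by the fundamental domain [0,1). *)
Definition S1 : Type := { x : R | 0 <= x < 1 }.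

Lemma frac_part_range (x : R) : 0 <= frac_part x < 1.
Proof.
  unfold frac_part. destruct (base_Int_part x) as [H1 H2]. lra.
Qed.

Definition proj (x : R) : S1 := exist _ (frac_part x) (frac_part_range x).

Definition cdist (x y : S1) : R :=
  let t := frac_part (proj1_sig x - proj1_sig y) in Rmin t (1 - t).

Definition circ_continuous (f : S1 -> S1) : Prop :=
  forall x eps, 0 < eps -> exists delta, 0 < delta /\
    forall y, cdist x y < delta -> cdist (f x) (f y) < eps.

Definition is_homeo (f : S1 -> S1) : Prop :=
  circ_continuous f /\
  exists g : S1 -> S1,
    (forall x, g (f x) = x) /\ (forall y, f (g y) = y) /\ circ_continuous g.

Definition orientation_preserving (f : S1 -> S1) : Prop :=
  exists F : R -> R,
    continuity F /\
    (forall x y, x < y -> F x < F y) /\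
    (forall x, F (x + 1) = F x + 1) /\
    (forall x, proj (F x) = f (proj x)).

Definition homeo_plus (f : S1 -> S1) : Prop :=
  is_homeo f /\ orientation_preserving f.

(** A homomorphism psi : G -> Homeo_+(S^1), G = <a, b | a^2 = b^3 = e>,
    is identified with the pair (psi(a), psi(b)). *)
Definition Rep : Type := ((S1 -> S1) * (S1 -> S1))%type.

Definition in_Hom (p : Rep) : Prop :=
  homeo_plus (fst p) /\ homeo_plus (snd p) /\
  (forall x, fst p (fst p x) = x) /\
  (forall x, snd p (snd p (snd p x)) = x).

(** psi(b)^{-1} = psi(b)^2 since psi(b)^3 = id. *)
Definition binv (p : Rep) (x : S1) : S1 := snd p (snd p x).

(** Basic uniform neighbourhoods: psi(a), psi(b), psi(b)^{-1} are
    uniformly eps-close. *)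
Definition near (eps : R) (p q : Rep) : Prop :=
  forall x,
    cdist (fst p x) (fst q x) < eps /\
    cdist (snd p x) (snd q x) < eps /\
    cdist (binv p x) (binv q x) < eps.

Definition is_nbhd (N : Rep -> Prop) (p : Rep) : Prop :=
  exists eps, 0 < eps /\ forall q, in_Hom q -> near eps p q -> N q.

Definition path_continuous (g : R -> Rep) : Prop :=
  forall t, 0 <= t <= 1 -> forall eps, 0 < eps -> exists delta, 0 < delta /\
    forall s, 0 <= s <= 1 -> Rabs (s - t) < delta -> near eps (g t) (g s).

Definition path_connected (V : Rep -> Prop) : Prop :=
  forall p q, V p -> V q -> exists g : R -> Rep,
    path_continuous g /\ g 0 = p /\ g 1 = q /\
    (forall t, 0 <= t <= 1 -> V (g t)).

(* Let f in Homeo_+(S^1) satisfy f^n = id and let F be a lift.  Then F^n is the translation by an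
   integer k, and the average K = (F^0 + ... + F^(n-1)) / n is again a lift, with K o F = K + k/n:
   f is conjugate to the rotation by k/n.  A nearby g with g^n = id has, after an integer shift,
   a lift uniformly close to F; the same k occurs, and the average of that lift is close to K.
   Hence the maps H^-1 o (x + k/n) o H with H a lift close to K form a neighbourhood of f among
   the maps of period n, and it is path-connected because the set of such lifts H is convex.
   Taking such neighbourhoods for psi(alpha) (n = 2) and psi(beta) (n = 3) gives the theorem. *)

From Stdlib Require Import Reals Lra Lia ProofIrrelevance ClassicalEpsilon FunctionalExtensionality.
Open Scope R_scope.

Lemma IZR_eq_of_close (a b : Z) : Rabs (IZR a - IZR b) < 1 -> a = b.
Proof.
  intros H; apply Rabs_def2 in H; rewrite <- minus_IZR in H.
  assert (IZR (a - b) < IZR 1) as H1%lt_IZR by lra.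
  assert (IZR (-1) < IZR (a - b)) as H2%lt_IZR by lra.
  lia.
Qed.

Lemma IVT_exists (h : R -> R) (a b c : R) :
  continuity h -> (h a - c) * (h b - c) <= 0 -> exists w, h w = c.
Proof.
  intros Hh Hab.
  assert (Hc : continuity (fun x => h x - c)) by reg.
  destruct (Rle_or_lt a b) as [Hle | Hlt].
  - destruct (IVT_cor _ a b Hc Hle Hab) as [w [_ Hw]]; exists w; lra.
  - destruct (IVT_cor _ b a Hc (Rlt_le _ _ Hlt)) as [w [_ Hw]]; [lra |].
    exists w; lra.
Qed.

(* Leaving the c-neighbourhood of z0 would force h through z0 + c or z0 - c,
   which is at distance c from every integer. *)
Lemma continuous_near_integer_stable (h : R -> R) (c : R) (z0 : Z) :
  continuity h -> c <= 1/2 ->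
  (forall x, exists z : Z, Rabs (h x - IZR z) < c) ->
  Rabs (h 0 - IZR z0) < c -> forall x, Rabs (h x - IZR z0) < c.
Proof.
  intros Hh Hc Hnear H0 x.
  destruct (Rlt_or_le (Rabs (h x - IZR z0)) c) as [| Hfar]; [assumption | exfalso].
  apply Rabs_def2 in H0.
  assert (Hcross : exists w, h w = IZR z0 + c \/ h w = IZR z0 - c).
  { destruct (Rle_or_lt 0 (h x - IZR z0)).
    - rewrite Rabs_right in Hfar by lra.
      destruct (IVT_exists h 0 x (IZR z0 + c)) as [w Hw]; [auto | nra | eauto].
    - rewrite Rabs_left in Hfar by lra.
      destruct (IVT_exists h 0 x (IZR z0 - c)) as [w Hw]; [auto | nra | eauto]. }
  destruct Hcross as [w Hw]; destruct (Hnear w) as [z Hz]; apply Rabs_def2 in Hz.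
  assert (z = z0) as -> by (apply IZR_eq_of_close, Rabs_def1; destruct Hw; lra).
  destruct Hw; lra.
Qed.

Lemma continuous_integer_valued_const (h : R -> R) :
  continuity h -> (forall x, exists z : Z, h x = IZR z) -> forall x, h x = h 0.
Proof.
  intros Hh Hint x.
  destruct (Hint 0) as [z0 E0], (Hint x) as [z Ez].
  assert (Hstable : Rabs (h x - IZR z0) < 1/2).
  { apply continuous_near_integer_stable; [auto | lra | | rewrite E0, Rminus_diag, Rabs_R0; lra].
    intros y; destruct (Hint y) as [zy Ey]; exists zy; rewrite Ey, Rminus_diag, Rabs_R0; lra. }
  rewrite Ez in Hstable |- *; rewrite E0.
  rewrite (IZR_eq_of_close z z0); [reflexivity | lra].
Qed.

Lemma S1_eq (a b : S1) : proj1_sig a = proj1_sig b -> a = b.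
Proof.
  destruct a as [a Ha], b as [b Hb]; simpl; intros ->.
  f_equal; apply proof_irrelevance.
Qed.

Lemma frac_part_add_int (u : R) (z : Z) : frac_part (u + IZR z) = frac_part u.
Proof.
  unfold frac_part.
  rewrite <- (Int_part_spec (u + IZR z) (Int_part u + z)), plus_IZR; [ring |].
  destruct (base_Int_part u); rewrite plus_IZR; lra.
Qed.

Lemma proj_add_int (u : R) (z : Z) : proj (u + IZR z) = proj u.
Proof. apply S1_eq; apply frac_part_add_int. Qed.

Lemma proj_val (s : S1) : proj (proj1_sig s) = s.
Proof.
  apply S1_eq; simpl; symmetry.
  apply (Int_part_frac_part_spec _ 0); [exact (proj2_sig s) | ring].
Qed.

Lemma proj_eq_int (u v : R) : proj u = proj v -> exists z : Z, u - v = IZR z.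
Proof.
  intros H; exists (Int_part u - Int_part v)%Z.
  assert (E : frac_part u = frac_part v) by exact (f_equal (@proj1_sig _ _) H).
  unfold frac_part in E; rewrite minus_IZR; lra.
Qed.

Lemma cdist_proj (a b : R) :
  cdist (proj a) (proj b) = Rmin (frac_part (a - b)) (1 - frac_part (a - b)).
Proof.
  unfold cdist; simpl.
  replace (frac_part a - frac_part b) with (a - b + IZR (Int_part b - Int_part a))
    by (unfold frac_part; rewrite minus_IZR; ring).
  rewrite frac_part_add_int; reflexivity.
Qed.

Lemma cdist_proj_le (a b : R) : cdist (proj a) (proj b) <= Rabs (a - b).
Proof.
  rewrite cdist_proj; unfold frac_part.
  destruct (base_Int_part (a - b)) as [H1 H2].
  destruct (Rle_or_lt 0 (a - b)) as [Hab | Hab].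
  - assert (IZR (-1) < IZR (Int_part (a - b))) as Hz%lt_IZR by lra.
    assert (0 <= IZR (Int_part (a - b))) by (apply IZR_le; lia).
    rewrite Rabs_right by lra; eapply Rle_trans; [apply Rmin_l | lra].
  - assert (IZR (Int_part (a - b)) < IZR 0) as Hz%lt_IZR by lra.
    assert (IZR (Int_part (a - b)) <= -1) by (apply (IZR_le _ (-1)); lia).
    rewrite Rabs_left by lra; eapply Rle_trans; [apply Rmin_r | lra].
Qed.

Lemma cdist_proj_lt (a b d : R) :
  cdist (proj a) (proj b) < d -> exists z : Z, Rabs (b - a - IZR z) < d.
Proof.
  rewrite cdist_proj; unfold frac_part.
  destruct (base_Int_part (a - b)) as [H1 H2].
  apply Rmin_case_strong; intros _ Hd.
  - exists (- Int_part (a - b))%Z; rewrite opp_IZR, Rabs_left1; lra.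
  - exists (- Int_part (a - b) - 1)%Z; rewrite minus_IZR, opp_IZR, Rabs_right; lra.
Qed.

Definition uniformly_continuous (f : R -> R) : Prop :=
  forall eps, 0 < eps -> exists d, 0 < d /\
    forall x y, Rabs (x - y) < d -> Rabs (f x - f y) < eps.

Lemma continuity_of_ball (f : R -> R) :
  (forall x eps, 0 < eps -> exists d, 0 < d /\
     forall y, Rabs (y - x) < d -> Rabs (f y - f x) < eps) ->
  continuity f.
Proof.
  intros Hf x eps Heps; destruct (Hf x eps Heps) as [d [Hd Hy]].
  exists d; split; [lra |]; intros y [_ Hyx]; exact (Hy y Hyx).
Qed.

Definition deck_equivariant (L : R -> R) : Prop := forall x, L (x + 1) = L x + 1.

Lemma deck_equivariant_add_int (L : R -> R) :
  deck_equivariant L -> forall x (z : Z), L (x + IZR z) = L x + IZR z.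
Proof.
  intros HL x z; induction z using Z.peano_ind.
  - rewrite !Rplus_0_r; reflexivity.
  - rewrite succ_IZR, <- !Rplus_assoc, HL, IHz; reflexivity.
  - rewrite <- Z.sub_1_r, minus_IZR in *.
    specialize (HL (x + (IZR z - 1))).
    replace (x + (IZR z - 1) + 1) with (x + IZR z) in HL by ring; lra.
Qed.

Lemma deck_equivariant_uniformly_continuous (L : R -> R) :
  continuity L -> deck_equivariant L -> uniformly_continuous L.
Proof.
  intros Hc HL eps Heps.
  destruct (@Heine_cor2 L (-1) 2 (fun x _ => Hc x) (mkposreal eps Heps)) as [[d Hd] Hu].
  simpl in Hu; exists (Rmin d 1); split; [apply Rmin_glb_lt; lra |].
  intros x y Hxy.
  pose proof (Rmin_l d 1); pose proof (Rmin_r d 1); apply Rabs_def2 in Hxy.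
  destruct (base_Int_part x) as [B1 B2]; set (z := Int_part x) in *.
  replace x with (x - IZR z + IZR z) by ring; replace y with (y - IZR z + IZR z) by ring.
  rewrite !(deck_equivariant_add_int L HL).
  replace (L (x - IZR z) + IZR z - (L (y - IZR z) + IZR z))
    with (L (x - IZR z) - L (y - IZR z)) by ring.
  apply Hu; try lra; apply Rabs_def1; lra.
Qed.

Record is_lift (L : R -> R) : Prop := {
  lift_continuous : continuity L;
  lift_increasing : forall x y, x < y -> L x < L y;
  lift_equivariant : deck_equivariant L }.

Lemma lift_uniformly_continuous (L : R -> R) : is_lift L -> uniformly_continuous L.
Proof. intros [Hc _ He]; exact (deck_equivariant_uniformly_continuous L Hc He). Qed.

Lemma lift_injective (L : R -> R) : is_lift L -> forall x y, L x = L y -> x = y.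
Proof.
  intros HL x y E; destruct (Rtotal_order x y) as [h | [h | h]];
    [apply (lift_increasing L HL) in h | | apply (lift_increasing L HL) in h]; lra.
Qed.

Lemma lift_surjective (L : R -> R) : is_lift L -> forall y, exists x, L x = y.
Proof.
  intros HL y.
  destruct (archimed (Rabs (y - L 0))) as [Hn _]; set (n := up (Rabs (y - L 0))) in *.
  pose proof (deck_equivariant_add_int L (lift_equivariant L HL) 0 n) as Eup.
  pose proof (deck_equivariant_add_int L (lift_equivariant L HL) 0 (- n)) as Edown.
  rewrite opp_IZR, Rplus_0_l in *.
  assert (Hy : Rabs (y - L 0) < IZR n) by lra; apply Rabs_def2 in Hy.
  apply (IVT_exists L (- IZR n) (IZR n) y (lift_continuous L HL)).
  rewrite Eup, Edown; nra.
Qed.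

Definition lift_inv (L : R -> R) (y : R) : R := epsilon (inhabits 0) (fun x => L x = y).

Lemma lift_lift_inv (L : R -> R) : is_lift L -> forall y, L (lift_inv L y) = y.
Proof.
  intros HL y; apply (epsilon_spec (inhabits 0) (fun x => L x = y)).
  exact (lift_surjective L HL y).
Qed.

Lemma lift_inv_lift (L : R -> R) : is_lift L -> forall x, lift_inv L (L x) = x.
Proof. intros HL x; apply (lift_injective L HL), lift_lift_inv, HL. Qed.

Lemma lift_inv_is_lift (L : R -> R) : is_lift L -> is_lift (lift_inv L).
Proof.
  intros HL.
  assert (Hincr : forall a b, a < b -> lift_inv L a < lift_inv L b).
  { intros a b Hab; destruct (Rlt_or_le (lift_inv L a) (lift_inv L b)) as [| Hba]; [auto |].
    destruct Hba as [Hba%(lift_increasing L HL) | Hba]; [| apply (f_equal L) in Hba];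
      rewrite !(lift_lift_inv L HL) in Hba; lra. }
  split; [| exact Hincr |].
  - apply continuity_of_ball; intros y eps Heps; set (x := lift_inv L y).
    assert (Hlo : L (x - eps) < y)
      by (rewrite <- (lift_lift_inv L HL y); apply (lift_increasing L HL); unfold x; lra).
    assert (Hhi : y < L (x + eps))
      by (rewrite <- (lift_lift_inv L HL y) at 1; apply (lift_increasing L HL); unfold x; lra).
    exists (Rmin (y - L (x - eps)) (L (x + eps) - y)); split; [apply Rmin_glb_lt; lra |].
    intros y' Hy'; apply Rabs_def2 in Hy'.
    pose proof (Rmin_l (y - L (x - eps)) (L (x + eps) - y)).
    pose proof (Rmin_r (y - L (x - eps)) (L (x + eps) - y)).
    assert (lift_inv L (L (x - eps)) < lift_inv L y') by (apply Hincr; lra).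
    assert (lift_inv L y' < lift_inv L (L (x + eps))) by (apply Hincr; lra).
    rewrite !(lift_inv_lift L HL) in *; apply Rabs_def1; fold x; lra.
  - intros y; rewrite <- (lift_lift_inv L HL y) at 1.
    rewrite <- (lift_equivariant L HL); apply (lift_inv_lift L HL).
Qed.

Lemma is_lift_id : is_lift (fun x => x).
Proof. split; [reg | auto | intros x; reflexivity]. Qed.

Lemma is_lift_comp (L M : R -> R) : is_lift L -> is_lift M -> is_lift (fun x => L (M x)).
Proof.
  intros [Lc Li Le] [Mc Mi Me]; split.
  - exact (continuity_comp M L Mc Lc).
  - auto.
  - intros x; rewrite Me, Le; reflexivity.
Qed.

Lemma is_lift_iter (L : R -> R) (n : nat) : is_lift L -> is_lift (Nat.iter n L).
Proof.
  intros HL; induction n as [| n IHn]; [exact is_lift_id |].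
  exact (is_lift_comp L _ HL IHn).
Qed.

Lemma is_lift_add_const (L : R -> R) (c : R) : is_lift L -> is_lift (fun x => L x + c).
Proof.
  intros [Lc Li Le]; split.
  - reg.
  - intros x y Hxy; specialize (Li x y Hxy); lra.
  - intros x; rewrite Le; ring.
Qed.

Lemma Rabs_convex_lt (t a b e : R) :
  0 <= t <= 1 -> Rabs a < e -> Rabs b < e -> Rabs ((1 - t) * a + t * b) < e.
Proof.
  intros Ht Ha Hb; eapply Rle_lt_trans; [apply Rabs_triang |].
  rewrite !Rabs_mult, (Rabs_right (1 - t)), (Rabs_right t) by lra.
  set (M := Rmax (Rabs a) (Rabs b)).
  assert (M < e) by (apply Rmax_lub_lt; lra).
  assert ((1 - t) * Rabs a <= (1 - t) * M) by (apply Rmult_le_compat_l; [lra | apply Rmax_l]).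
  assert (t * Rabs b <= t * M) by (apply Rmult_le_compat_l; [lra | apply Rmax_r]).
  lra.
Qed.

Lemma is_lift_convex (H0 H1 : R -> R) (t : R) :
  is_lift H0 -> is_lift H1 -> 0 <= t <= 1 -> is_lift (fun x => (1 - t) * H0 x + t * H1 x).
Proof.
  intros [Hc0 Hi0 He0] [Hc1 Hi1 He1] Ht; split.
  - reg.
  - intros x y Hxy; specialize (Hi0 x y Hxy); specialize (Hi1 x y Hxy).
    assert (0 <= (1 - t) * (H0 y - H0 x)) by (apply Rmult_le_pos; lra).
    assert (0 <= t * (H1 y - H1 x)) by (apply Rmult_le_pos; lra).
    destruct (Req_dec t 1) as [-> | Ht1]; [lra |].
    assert (0 < (1 - t) * (H0 y - H0 x)) by (apply Rmult_lt_0_compat; lra); lra.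
  - intros x; rewrite He0, He1; ring.
Qed.

Definition descend (L : R -> R) (s : S1) : S1 := proj (L (proj1_sig s)).

Lemma descend_proj (L : R -> R) :
  deck_equivariant L -> forall x, descend L (proj x) = proj (L x).
Proof.
  intros HL x; unfold descend; simpl; unfold frac_part.
  replace (x - IZR (Int_part x)) with (x + IZR (- Int_part x)) by (rewrite opp_IZR; ring).
  rewrite (deck_equivariant_add_int L HL); apply proj_add_int.
Qed.

Lemma descend_of_lift (L : R -> R) (f : S1 -> S1) :
  (forall x, proj (L x) = f (proj x)) -> f = descend L.
Proof.
  intros Hf; apply functional_extensionality; intros s.
  unfold descend; rewrite Hf, proj_val; reflexivity.
Qed.

Lemma descend_comp (L M : R -> R) :
  deck_equivariant L -> forall s, descend L (descend M s) = descend (fun x => L (M x)) s.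
Proof. intros HL s; apply descend_proj, HL. Qed.

Lemma descend_id (s : S1) : descend (fun x => x) s = s.
Proof. apply proj_val. Qed.

Lemma descend_iter (L : R -> R) (n : nat) :
  deck_equivariant L -> forall s, Nat.iter n (descend L) s = descend (Nat.iter n L) s.
Proof.
  intros HL; induction n as [| n IHn]; intros s; [symmetry; apply descend_id |].
  rewrite Nat.iter_succ, IHn; exact (descend_comp L (Nat.iter n L) HL s).
Qed.

Lemma descend_close (L M : R -> R) (e : R) :
  (forall x, Rabs (L x - M x) < e) -> forall s, cdist (descend L s) (descend M s) < e.
Proof. intros H s; eapply Rle_lt_trans; [apply cdist_proj_le | apply H]. Qed.

Lemma descend_continuous (L : R -> R) :
  uniformly_continuous L -> deck_equivariant L -> circ_continuous (descend L).
Proof.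
  intros Hu HL s eps Heps; destruct (Hu eps Heps) as [d [Hd Hclose]].
  exists d; split; [exact Hd |]; intros y Hy.
  rewrite <- (proj_val s), <- (proj_val y) in Hy |- *.
  destruct (cdist_proj_lt _ _ _ Hy) as [z Hz].
  rewrite <- (proj_add_int (proj1_sig y) (- z)), !(descend_proj L HL), opp_IZR.
  eapply Rle_lt_trans; [apply cdist_proj_le | apply Hclose].
  replace (proj1_sig s - (proj1_sig y + - IZR z)) with (- (proj1_sig y - proj1_sig s - IZR z))
    by ring.
  rewrite Rabs_Ropp; exact Hz.
Qed.

Lemma descend_homeo_plus (L : R -> R) : is_lift L -> homeo_plus (descend L).
Proof.
  intros HL; pose proof (lift_inv_is_lift L HL) as HI.
  assert (Hcont : forall M, is_lift M -> circ_continuous (descend M)).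
  { intros M HM; apply descend_continuous;
      [apply lift_uniformly_continuous | apply lift_equivariant]; exact HM. }
  split; [split; [exact (Hcont L HL) |] |].
  - exists (descend (lift_inv L)); split; [| split; [| exact (Hcont _ HI)]]; intros s.
    + rewrite descend_comp by apply HI; unfold descend.
      rewrite (lift_inv_lift L HL); apply proj_val.
    + rewrite descend_comp by apply HL; unfold descend.
      rewrite (lift_lift_inv L HL); apply proj_val.
  - exists L; split; [exact (lift_continuous L HL) |].
    split; [exact (lift_increasing L HL) |]; split; [exact (lift_equivariant L HL) |].
    intros x; rewrite descend_proj by apply HL; reflexivity.
Qed.

Fixpoint iter_sum (F : R -> R) (m : nat) (x : R) : R :=
  match m with
  | O => 0
  | S m' => iter_sum F m' x + Nat.iter m' F x
  end.

Definition iter_avg (F : R -> R) (n : nat) (x : R) : R := iter_sum F n x / INR n.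

Lemma iter_sum_shift (F : R -> R) (m : nat) (x : R) :
  iter_sum F m (F x) = iter_sum F m x + Nat.iter m F x - x.
Proof.
  induction m as [| m IHm]; simpl; [ring |].
  rewrite IHm, <- (Nat.iter_succ_r m); simpl; ring.
Qed.

Lemma iter_sum_continuous (F : R -> R) (m : nat) : is_lift F -> continuity (iter_sum F m).
Proof.
  intros HF; induction m as [| m IHm]; simpl.
  - apply continuity_const; intros x y; reflexivity.
  - pose proof (lift_continuous _ (is_lift_iter F m HF)); reg.
Qed.

Lemma iter_sum_equivariant (F : R -> R) (m : nat) :
  is_lift F -> forall x, iter_sum F m (x + 1) = iter_sum F m x + INR m.
Proof.
  intros HF x; induction m as [| m IHm]; cbn [iter_sum]; [simpl; ring |].
  rewrite IHm, (lift_equivariant _ (is_lift_iter F m HF)), S_INR; ring.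
Qed.

Lemma iter_sum_increasing (F : R -> R) (m : nat) :
  is_lift F -> forall x y, x < y -> iter_sum F (S m) x < iter_sum F (S m) y.
Proof.
  intros HF x y Hxy; induction m as [| m IHm]; simpl in *; [lra |].
  pose proof (lift_increasing _ (is_lift_iter F (S m) HF) x y Hxy); simpl in *; lra.
Qed.

Lemma iter_avg_is_lift (F : R -> R) (n : nat) :
  (1 <= n)%nat -> is_lift F -> is_lift (iter_avg F n).
Proof.
  intros Hn HF; assert (Hn' : 0 < INR n) by (apply lt_0_INR; lia).
  unfold iter_avg; split.
  - pose proof (iter_sum_continuous F n HF); reg.
  - destruct n as [| m]; [lia |]; intros x y Hxy.
    apply Rmult_lt_compat_r; [apply Rinv_0_lt_compat, Hn' | apply iter_sum_increasing; auto].
  - intros x; rewrite iter_sum_equivariant by exact HF; field; lra.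
Qed.

Lemma iter_avg_shift (F : R -> R) (n : nat) (c : R) :
  (1 <= n)%nat -> (forall x, Nat.iter n F x = x + c) ->
  forall x, iter_avg F n (F x) = iter_avg F n x + c / INR n.
Proof.
  intros Hn Hc x; unfold iter_avg; rewrite iter_sum_shift, Hc.
  field; apply not_0_INR; lia.
Qed.

Lemma iter_sum_close (F G : R -> R) (m : nat) (e : R) :
  (forall j x, (j < m)%nat -> Rabs (Nat.iter j G x - Nat.iter j F x) <= e) ->
  forall x, Rabs (iter_sum G m x - iter_sum F m x) <= INR m * e.
Proof.
  intros Hclose x; induction m as [| m IHm]; cbn [iter_sum];
    [simpl; rewrite Rminus_diag, Rabs_R0; lra |].
  replace (iter_sum G m x + Nat.iter m G x - (iter_sum F m x + Nat.iter m F x))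
    with ((iter_sum G m x - iter_sum F m x) + (Nat.iter m G x - Nat.iter m F x)) by ring.
  eapply Rle_trans; [apply Rabs_triang |].
  rewrite S_INR, Rmult_plus_distr_r, Rmult_1_l; apply Rplus_le_compat; auto.
Qed.

Lemma iter_avg_close (F G : R -> R) (n : nat) (e : R) :
  (1 <= n)%nat ->
  (forall j x, (j < n)%nat -> Rabs (Nat.iter j G x - Nat.iter j F x) <= e) ->
  forall x, Rabs (iter_avg G n x - iter_avg F n x) <= e.
Proof.
  intros Hn Hclose x; assert (Hn' : 0 < INR n) by (apply lt_0_INR; lia).
  unfold iter_avg; replace (iter_sum G n x / INR n - iter_sum F n x / INR n)
    with ((iter_sum G n x - iter_sum F n x) / INR n) by (field; lra).
  unfold Rdiv; rewrite Rabs_mult, Rabs_inv, (Rabs_right (INR n)) by lra.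
  apply (Rmult_le_reg_r (INR n)); [exact Hn' |].
  rewrite Rmult_assoc, Rinv_l, Rmult_1_r, Rmult_comm by lra.
  exact (iter_sum_close F G n e Hclose x).
Qed.

Lemma iter_close_uniform (F : R -> R) (m : nat) :
  uniformly_continuous F -> forall eps, 0 < eps -> exists d, 0 < d /\
    forall G, (forall x, Rabs (G x - F x) < d) ->
    forall j x, (j <= m)%nat -> Rabs (Nat.iter j G x - Nat.iter j F x) < eps.
Proof.
  intros HF; induction m as [| m IHm]; intros eps Heps.
  - exists 1; split; [lra |]; intros G _ j x Hj.
    replace j with 0%nat by lia; simpl; rewrite Rminus_diag, Rabs_R0; exact Heps.
  - destruct (HF (eps / 2)) as [dF [HdF HFclose]]; [lra |].
    destruct (IHm (Rmin eps dF)) as [d [Hd Hiter]]; [apply Rmin_glb_lt; lra |].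
    exists (Rmin d (eps / 2)); split; [apply Rmin_glb_lt; lra |]; intros G HG j x Hj.
    assert (HGd : forall x, Rabs (G x - F x) < d)
      by (intros y; eapply Rlt_le_trans; [apply HG | apply Rmin_l]).
    destruct (Nat.eq_dec j (S m)) as [-> | Hjm].
    + specialize (Hiter G HGd m x (le_n m)); simpl.
      pose proof (HG (Nat.iter m G x)); pose proof (Rmin_r d (eps / 2)).
      pose proof (HFclose _ _ (Rlt_le_trans _ _ _ Hiter (Rmin_r eps dF))).
      replace (G (Nat.iter m G x) - F (Nat.iter m F x)) with
        ((G (Nat.iter m G x) - F (Nat.iter m G x)) + (F (Nat.iter m G x) - F (Nat.iter m F x)))
        by ring.
      eapply Rle_lt_trans; [apply Rabs_triang | lra].
    + eapply Rlt_le_trans; [apply Hiter; [exact HGd | lia] | apply Rmin_l].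
Qed.

Definition conj_transl (H : R -> R) (r x : R) : R := lift_inv H (H x + r).

Lemma conj_transl_is_lift (H : R -> R) (r : R) : is_lift H -> is_lift (conj_transl H r).
Proof.
  intros HH; apply (is_lift_comp (lift_inv H) (fun x => H x + r)).
  - exact (lift_inv_is_lift H HH).
  - exact (is_lift_add_const H r HH).
Qed.

Lemma conj_transl_iter (H : R -> R) (r : R) (m : nat) :
  is_lift H -> forall x, Nat.iter m (conj_transl H r) x = lift_inv H (H x + INR m * r).
Proof.
  intros HH x; induction m as [| m IHm].
  - simpl; rewrite Rmult_0_l, Rplus_0_r, (lift_inv_lift H HH); reflexivity.
  - rewrite Nat.iter_succ, IHm; unfold conj_transl.
    rewrite (lift_lift_inv H HH), S_INR, Rplus_assoc, Rmult_plus_distr_r, Rmult_1_l; reflexivity.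
Qed.

Lemma conj_transl_of_semiconj (H G : R -> R) (r : R) :
  is_lift H -> (forall x, H (G x) = H x + r) -> forall x, conj_transl H r x = G x.
Proof. intros HH HG x; unfold conj_transl; rewrite <- HG; apply (lift_inv_lift H HH). Qed.

Lemma lift_conj_transl_avg (G : R -> R) (n : nat) (c : R) :
  (1 <= n)%nat -> is_lift G -> (forall x, Nat.iter n G x = x + c) ->
  forall x, conj_transl (iter_avg G n) (c / INR n) x = G x.
Proof.
  intros Hn HG Hc; apply conj_transl_of_semiconj.
  - exact (iter_avg_is_lift G n Hn HG).
  - exact (iter_avg_shift G n c Hn Hc).
Qed.

Lemma conj_transl_close (K : R -> R) (r : R) :
  is_lift K -> forall rho, 0 < rho -> exists eta, 0 < eta /\
    forall H, is_lift H -> (forall x, Rabs (H x - K x) < eta) ->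
    forall x, Rabs (conj_transl H r x - conj_transl K r x) < rho.
Proof.
  intros HK rho Hrho.
  destruct (lift_uniformly_continuous _ (lift_inv_is_lift K HK) rho Hrho) as [d [Hd Hinv]].
  exists (d / 2); split; [lra |]; intros H HH Hclose x.
  set (y := conj_transl H r x).
  assert (Hy : H y = H x + r) by apply (lift_lift_inv H HH).
  unfold conj_transl; rewrite <- (lift_inv_lift K HK y); apply Hinv.
  pose proof (Hclose y) as Ay; pose proof (Hclose x) as Ax.
  apply Rabs_def2 in Ay; apply Rabs_def2 in Ax; apply Rabs_def1; lra.
Qed.

Definition periodic_homeo (n : nat) (g : S1 -> S1) : Prop :=
  homeo_plus g /\ forall s, Nat.iter n g s = s.

(* For g^n = id, the iterates g^j (j < n) include g^-1 = g^(n-1). *)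
Definition iter_near (n : nat) (e : R) (f g : S1 -> S1) : Prop :=
  forall s j, (j < n)%nat -> cdist (Nat.iter j f s) (Nat.iter j g s) < e.

Lemma lift_of_homeo_plus (f : S1 -> S1) : homeo_plus f -> exists L, is_lift L /\ f = descend L.
Proof.
  intros [_ [L [Lc [Li [Le Lf]]]]].
  exists L; split; [split; assumption | exact (descend_of_lift L f Lf)].
Qed.

Lemma lift_iter_periodic (L : R -> R) (n : nat) :
  is_lift L -> (forall s, Nat.iter n (descend L) s = s) ->
  exists z : Z, forall x, Nat.iter n L x = x + IZR z.
Proof.
  intros HL Hper.
  pose proof (is_lift_iter L n HL) as HLn.
  assert (Hint : forall x, exists z : Z, Nat.iter n L x - x = IZR z).
  { intros x; apply proj_eq_int.
    rewrite <- (descend_proj _ (lift_equivariant _ HLn)), <- descend_iter by apply HL.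
    apply Hper. }
  destruct (Hint 0) as [z Hz]; exists z; intros x.
  assert (Hcont : continuity (fun y => Nat.iter n L y - y))
    by (pose proof (lift_continuous _ HLn); reg).
  pose proof (continuous_integer_valued_const _ Hcont Hint x); simpl in *; lra.
Qed.

Lemma lift_close_shift (F G : R -> R) (d : R) :
  is_lift F -> is_lift G -> d <= 1/2 ->
  (forall s, cdist (descend F s) (descend G s) < d) ->
  exists m : Z, forall x, Rabs (G x - F x - IZR m) < d.
Proof.
  intros HF HG Hd Hclose.
  assert (Hnear : forall x, exists z : Z, Rabs (G x - F x - IZR z) < d).
  { intros x; apply cdist_proj_lt.
    rewrite <- (descend_proj F), <- (descend_proj G) by apply HF || apply HG; apply Hclose. }
  destruct (Hnear 0) as [m Hm]; exists m.
  apply (continuous_near_integer_stable (fun x => G x - F x)); auto.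
  pose proof (lift_continuous F HF); pose proof (lift_continuous G HG); reg.
Qed.

Lemma conj_transl_periodic (H : R -> R) (n : nat) (r : R) (z : Z) :
  is_lift H -> INR n * r = IZR z -> periodic_homeo n (descend (conj_transl H r)).
Proof.
  intros HH Hr; split; [apply descend_homeo_plus, conj_transl_is_lift, HH |]; intros s.
  rewrite descend_iter by apply conj_transl_is_lift, HH; unfold descend.
  rewrite conj_transl_iter, Hr, <- (deck_equivariant_add_int H (lift_equivariant H HH)),
    (lift_inv_lift H HH) by exact HH.
  rewrite proj_add_int; apply proj_val.
Qed.

Lemma conj_transl_iter_near (K : R -> R) (n : nat) (r eps : R) :
  is_lift K -> 0 < eps -> exists rho, 0 < rho /\
    forall H, is_lift H -> (forall x, Rabs (H x - K x) < rho) ->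
    iter_near n eps (descend (conj_transl K r)) (descend (conj_transl H r)).
Proof.
  intros HK Heps; pose proof (conj_transl_is_lift K r HK) as HKr.
  destruct (iter_close_uniform _ n (lift_uniformly_continuous _ HKr) eps Heps)
    as [d [Hd Hiter]].
  destruct (conj_transl_close K r HK d Hd) as [rho [Hrho Hconj]].
  exists rho; split; [exact Hrho |]; intros H HH Hclose s j Hj.
  rewrite !descend_iter by (apply lift_equivariant, conj_transl_is_lift; assumption).
  apply descend_close; intros x; rewrite Rabs_minus_sym.
  apply Hiter; [apply Hconj; assumption | lia].
Qed.

Definition conj_rotation_near (K : R -> R) (r eta : R) (g : S1 -> S1) : Prop :=
  exists H, is_lift H /\ (forall x, Rabs (H x - K x) < eta) /\ g = descend (conj_transl H r).

Definition iter_path_continuous (n : nat) (gam : R -> S1 -> S1) : Prop :=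
  forall t, 0 <= t <= 1 -> forall e, 0 < e -> exists d, 0 < d /\
    forall s, 0 <= s <= 1 -> Rabs (s - t) < d -> iter_near n e (gam t) (gam s).

Definition iter_path_connected (n : nat) (W : (S1 -> S1) -> Prop) : Prop :=
  forall g0 g1, W g0 -> W g1 -> exists gam : R -> S1 -> S1,
    iter_path_continuous n gam /\ gam 0 = g0 /\ gam 1 = g1 /\
    (forall t, 0 <= t <= 1 -> W (gam t)).

Lemma conj_rotation_near_periodic (K : R -> R) (n : nat) (r eta : R) (z : Z) (g : S1 -> S1) :
  INR n * r = IZR z -> conj_rotation_near K r eta g -> periodic_homeo n g.
Proof. intros Hr [H [HH [_ ->]]]; exact (conj_transl_periodic H n r z HH Hr). Qed.

Lemma conj_rotation_near_path_connected (K : R -> R) (n : nat) (r eta : R) :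
  iter_path_connected n (conj_rotation_near K r eta).
Proof.
  intros g0 g1 [H0 [HH0 [C0 ->]]] [H1 [HH1 [C1 ->]]].
  set (Ht := fun t x => (1 - t) * H0 x + t * H1 x).
  assert (HHt : forall t, 0 <= t <= 1 -> is_lift (Ht t)) by (intros; apply is_lift_convex; auto).
  assert (Heta : 0 < eta) by (specialize (C0 0); pose proof (Rabs_pos (H0 0 - K 0)); lra).
  exists (fun t => descend (conj_transl (Ht t) r)); split; [| split; [| split]].
  - intros t Ht01 e He.
    destruct (conj_transl_iter_near (Ht t) n r e (HHt t Ht01) He) as [rho [Hrho Hnear]].
    exists (rho / (2 * eta + 1)); split; [apply Rdiv_lt_0_compat; lra |].
    intros s Hs01 Hst; apply Hnear; [auto |]; intros x; unfold Ht.
    replace ((1 - s) * H0 x + s * H1 x - ((1 - t) * H0 x + t * H1 x))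
      with ((s - t) * (H1 x - H0 x)) by ring.
    rewrite Rabs_mult.
    assert (Rabs (H1 x - H0 x) < 2 * eta).
    { specialize (C0 x); specialize (C1 x); apply Rabs_def2 in C0; apply Rabs_def2 in C1.
      apply Rabs_def1; lra. }
    assert (Rabs (s - t) * (2 * eta + 1) < rho).
    { apply (Rmult_lt_compat_r (2 * eta + 1)) in Hst; [| lra].
      unfold Rdiv in Hst; rewrite Rmult_assoc, Rinv_l, Rmult_1_r in Hst; lra. }
    pose proof (Rabs_pos (s - t)); nra.
  - replace (Ht 0) with H0 by (apply functional_extensionality; intros; unfold Ht; ring).
    reflexivity.
  - replace (Ht 1) with H1 by (apply functional_extensionality; intros; unfold Ht; ring).
    reflexivity.
  - intros t Ht01; exists (Ht t); split; [auto | split; [| reflexivity]]; intros x; unfold Ht.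
    replace ((1 - t) * H0 x + t * H1 x - K x) with ((1 - t) * (H0 x - K x) + t * (H1 x - K x))
      by ring.
    apply Rabs_convex_lt; auto.
Qed.

Section NearbyPeriodic.

Variables (n : nat) (F : R -> R) (z : Z).
Hypotheses (n_pos : (1 <= n)%nat) (F_lift : is_lift F)
  (F_iter : forall x, Nat.iter n F x = x + IZR z).

Lemma nearby_periodic_lift_same_transl : exists d, 0 < d /\
  forall G, is_lift G -> (forall x, Rabs (G x - F x) < d) ->
  (forall s, Nat.iter n (descend G) s = s) -> forall x, Nat.iter n G x = x + IZR z.
Proof.
  destruct (iter_close_uniform F n (lift_uniformly_continuous F F_lift) (1/2))
    as [d [Hd Hiter]]; [lra |].
  exists d; split; [exact Hd |]; intros G HG Hclose Hper.
  destruct (lift_iter_periodic G n HG Hper) as [z' Hz'].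
  assert (Hn0 : Rabs (Nat.iter n G 0 - Nat.iter n F 0) < 1/2) by (apply Hiter; auto).
  rewrite Hz', F_iter in Hn0.
  rewrite (IZR_eq_of_close z' z) in Hz'; [exact Hz' |].
  replace (IZR z' - IZR z) with (0 + IZR z' - (0 + IZR z)) by ring; lra.
Qed.

Lemma nearby_periodic_conj_rotation (eta : R) :
  0 < eta -> exists d, 0 < d /\
  forall g, periodic_homeo n g -> (forall s, cdist (descend F s) (g s) < d) ->
  conj_rotation_near (iter_avg F n) (IZR z / INR n) eta g.
Proof.
  intros Heta.
  destruct nearby_periodic_lift_same_transl as [d1 [Hd1 Hrot]].
  destruct (iter_close_uniform F n (lift_uniformly_continuous F F_lift) (eta / 2))
    as [d2 [Hd2 Hiter]]; [lra |].
  set (d := Rmin d1 (Rmin d2 (1/2))).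
  assert (Hd : 0 < d /\ d <= d1 /\ d <= d2 /\ d <= 1/2).
  { pose proof (Rmin_l d2 (1/2)); pose proof (Rmin_r d2 (1/2)).
    pose proof (Rmin_l d1 (Rmin d2 (1/2))); pose proof (Rmin_r d1 (Rmin d2 (1/2))).
    unfold d; repeat split; try lra; repeat apply Rmin_glb_lt; lra. }
  exists d; split; [tauto |]; intros g [Hg Hper] Hclose.
  destruct (lift_of_homeo_plus g Hg) as [G0 [HG0 ->]].
  destruct (lift_close_shift F G0 d F_lift HG0 ltac:(tauto) Hclose) as [m Hm].
  set (G := fun x => G0 x + IZR (- m)).
  assert (HG : is_lift G) by exact (is_lift_add_const G0 _ HG0).
  assert (EG : descend G0 = descend G)
    by (apply descend_of_lift; intros x; unfold G; rewrite proj_add_int;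
        symmetry; apply descend_proj, HG0).
  assert (HGF : forall x, Rabs (G x - F x) < d)
    by (intros x; unfold G; rewrite opp_IZR; replace (G0 x + - IZR m - F x)
          with (G0 x - F x - IZR m) by ring; apply Hm).
  rewrite EG in Hper |- *.
  assert (HGn : forall x, Nat.iter n G x = x + IZR z)
    by (apply Hrot; auto; intros x; eapply Rlt_le_trans; [apply HGF | tauto]).
  exists (iter_avg G n); split; [apply iter_avg_is_lift; auto | split].
  - intros x; apply (Rle_lt_trans _ (eta / 2)); [| lra].
    apply iter_avg_close; [exact n_pos |]; intros j y Hj; apply Rlt_le, Hiter; [| lia].
    intros u; eapply Rlt_le_trans; [apply HGF | tauto].
  - f_equal; apply functional_extensionality; intros x.
    symmetry; apply lift_conj_transl_avg; auto.
Qed.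

End NearbyPeriodic.

Lemma periodic_homeo_locally_path_connected (n : nat) (f : S1 -> S1) (eps : R) :
  (1 <= n)%nat -> periodic_homeo n f -> 0 < eps ->
  exists W : (S1 -> S1) -> Prop,
    W f /\ (forall g, W g -> periodic_homeo n g) /\ (forall g, W g -> iter_near n eps f g) /\
    (exists d, 0 < d /\
       forall g, periodic_homeo n g -> (forall s, cdist (f s) (g s) < d) -> W g) /\
    iter_path_connected n W.
Proof.
  intros Hn [Hf Hper] Heps.
  destruct (lift_of_homeo_plus f Hf) as [F [HF ->]].
  destruct (lift_iter_periodic F n HF Hper) as [z Hz].
  set (K := iter_avg F n); set (r := IZR z / INR n).
  assert (HK : is_lift K) by exact (iter_avg_is_lift F n Hn HF).
  assert (Hr : INR n * r = IZR z) by (unfold r; field; apply not_0_INR; lia).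
  assert (EF : F = conj_transl K r)
    by (apply functional_extensionality; intros x; symmetry; apply lift_conj_transl_avg; auto).
  destruct (conj_transl_iter_near K n r eps HK Heps) as [rho [Hrho Hnear]].
  exists (conj_rotation_near K r rho); split; [| split; [| split; [| split]]].
  - exists K; split; [exact HK | split; [| rewrite <- EF; reflexivity]].
    intros x; rewrite Rminus_diag, Rabs_R0; exact Hrho.
  - intros g; apply conj_rotation_near_periodic with z; exact Hr.
  - intros g [H [HH [Hclose ->]]]; rewrite EF; auto.
  - exact (nearby_periodic_conj_rotation n F z Hn HF Hz rho Hrho).
  - apply conj_rotation_near_path_connected.
Qed.

Lemma in_Hom_iff (q : Rep) : in_Hom q <-> periodic_homeo 2 (fst q) /\ periodic_homeo 3 (snd q).
Proof. unfold in_Hom, periodic_homeo; simpl; tauto. Qed.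

Lemma near_of_iter_near (p q : Rep) (e : R) :
  iter_near 2 e (fst p) (fst q) -> iter_near 3 e (snd p) (snd q) -> near e p q.
Proof.
  intros Ha Hb x; split; [| split];
    [apply (Ha x 1%nat) | apply (Hb x 1%nat) | apply (Hb x 2%nat)]; lia.
Qed.

Lemma path_connected_prod (Wa Wb : (S1 -> S1) -> Prop) :
  iter_path_connected 2 Wa -> iter_path_connected 3 Wb ->
  path_connected (fun q => Wa (fst q) /\ Wb (snd q)).
Proof.
  intros HWa HWb [a0 b0] [a1 b1] [A0 B0] [A1 B1].
  destruct (HWa a0 a1 A0 A1) as [ga [Hga [ga0 [ga1 gaW]]]].
  destruct (HWb b0 b1 B0 B1) as [gb [Hgb [gb0 [gb1 gbW]]]].
  exists (fun t => (ga t, gb t)); split; [| split; [| split]].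
  - intros t Ht e He.
    destruct (Hga t Ht e He) as [da [Hda Ca]], (Hgb t Ht e He) as [db [Hdb Cb]].
    exists (Rmin da db); split; [apply Rmin_glb_lt; auto |]; intros s Hs Hst.
    apply near_of_iter_near; simpl.
    + apply Ca; [auto | eapply Rlt_le_trans; [exact Hst | apply Rmin_l]].
    + apply Cb; [auto | eapply Rlt_le_trans; [exact Hst | apply Rmin_r]].
  - rewrite ga0, gb0; reflexivity.
  - rewrite ga1, gb1; reflexivity.
  - intros t Ht; split; [apply gaW | apply gbW]; exact Ht.
Qed.

Theorem proposition12p5 :
  forall (p : Rep) (N : Rep -> Prop),
    in_Hom p -> is_nbhd N p ->
    exists V : Rep -> Prop,
      (forall q, V q -> in_Hom q) /\
      (forall q, V q -> N q) /\
      V p /\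
      is_nbhd V p /\
      path_connected V.
Proof.
  intros p N Hp [e [He HN]]; apply in_Hom_iff in Hp as [Pa Pb].
  destruct (periodic_homeo_locally_path_connected 2 (fst p) e ltac:(lia) Pa He)
    as [Wa [Wa_p [Wa_per [Wa_near [[da [Hda Wa_nbhd]] Wa_path]]]]].
  destruct (periodic_homeo_locally_path_connected 3 (snd p) e ltac:(lia) Pb He)
    as [Wb [Wb_p [Wb_per [Wb_near [[db [Hdb Wb_nbhd]] Wb_path]]]]].
  assert (V_Hom : forall q, Wa (fst q) /\ Wb (snd q) -> in_Hom q)
    by (intros q [A B]; apply in_Hom_iff; auto).
  exists (fun q => Wa (fst q) /\ Wb (snd q)); split; [exact V_Hom | split; [| split; [| split]]].
  - intros q Hq; apply HN; [auto |].
    apply near_of_iter_near; [apply Wa_near | apply Wb_near]; apply Hq.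
  - auto.
  - exists (Rmin da db); split; [apply Rmin_glb_lt; auto |]; intros q Hq Hnear.
    apply in_Hom_iff in Hq as [Qa Qb]; split; [apply Wa_nbhd | apply Wb_nbhd]; auto; intros s;
      destruct (Hnear s) as [A [B _]]; eapply Rlt_le_trans; eauto; [apply Rmin_l | apply Rmin_r].
  - apply path_connected_prod; assumption.
Qed.
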